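(* For every reduced strategy $\sigma\in\mathcal S$, $$\sum_{a\in\mathcal A(\sigma)}\frac{1}{\beta(a)}=1.$$
   Context: Game tree: $V$ is the node set of a finite rooted tree with root $r$ and leaf set $L$; $C(v)$ denotes the set of children of $v$ and $p(v)$ the parent of $v\ne r$. The internal nodes are partitioned into infosets $N$ and actions $\mathcal A$ with $r\in N$, $C(v)\subseteq\mathcal A$ and $|C(v)|>1$ for $v\in N$, and $C(a)\subseteq N\cup L$ for $a\in\mathcal A$. A strategy is $\sigma:N\to V$ with $\sigma(v)\in C(v)$. For a strategy $\sigma$, $V(\sigma)$ is the smallest subset of $V$ containing $r$, containing $\sigma(v)$ for each $v\in N\cap V(\sigma)$, and containing $C(a)$ for each $a\in\mathcal A\cap V(\sigma)$; the reduced strategy is its restriction to $N\cap V(\sigma)$; $\mathcal S$ is the set of reduced strategies and $\mathcal A(\sigma):=\mathcal A\cap V(\sigma)$. Define $m:N\cup\mathcal A\to\mathbb N$ recursively from the bottom by $m(a)=1+\sum_{v\in C(a)\cap N}m(v)$ for $a\in\mathcal A$ and $m(v)=\sum_{a\in C(v)}m(a)$ for $v\in N$. Define $\beta:N\cup\mathcal A\to\mathbb R$ from the top by $\beta(r)=1$, $\beta(a)=m(a)\beta(p(a))$ for $a\in\mathcal A$, and $\beta(v)=\beta(p(v))/m(v)$ for $v\in N\setminus\{r\}$. *)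

From HB Require Import structures.
From mathcomp Require Import all_boot all_order all_algebra.
Set Implicit Arguments. Unset Strict Implicit. Unset Printing Implicit Defensive.
Import Order.TTheory GRing.Theory Num.Theory.

(* A finite rooted tree on the node type V (a finType) with root r is given by
   a parent map p : V -> V with the convention p r = r; see [rooted_tree]. *)

Definition children (V : finType) (r : V) (p : V -> V) (v : V) : {set V} :=
  [set w | (w != r) && (p w == v)].

Definition leaves (V : finType) (r : V) (p : V -> V) : {set V} :=
  [set v | children r p v == set0].

(* p r = r and every node reaches the root by iterating the parent map
   (so the parent relation is acyclic: this is a rooted tree). *)
Definition rooted_tree (V : finType) (r : V) (p : V -> V) : Prop :=
  p r = r /\ forall v : V, exists k : nat, iter k p v = r.

(* The game tree axioms: internal nodes partitioned into infosets N and
   actions A, r in N, C(v) ⊆ A and |C(v)| > 1 for v in N,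
   C(a) ⊆ N ∪ L for a in A. *)
Definition game_tree (V : finType) (r : V) (p : V -> V) (N A : {set V}) : Prop :=
  rooted_tree r p /\
  r \in N /\
  N :&: A = set0 /\
  (forall v : V, (v \in N :|: A) = (children r p v != set0)) /\
  (forall v : V, v \in N -> children r p v \subset A /\ 1 < #|children r p v|) /\
  (forall a : V, a \in A -> children r p a \subset N :|: leaves r p).

Definition strategy (V : finType) (r : V) (p : V -> V) (N : {set V})
  (sigma : V -> V) : Prop :=
  forall v : V, v \in N -> sigma v \in children r p v.

Definition closed_for (V : finType) (r : V) (p : V -> V) (N A : {set V})
  (sigma : V -> V) (S : {set V}) : bool :=
  [&& r \in S,
      [forall v in N :&: S, sigma v \in S]
    & [forall a in A :&: S, children r p a \subset S]].

Definition Vsigma (V : finType) (r : V) (p : V -> V) (N A : {set V})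
  (sigma : V -> V) : {set V} :=
  [set x | [forall S : {set V}, closed_for r p N A sigma S ==> (x \in S)]].

Definition Asigma (V : finType) (r : V) (p : V -> V) (N A : {set V})
  (sigma : V -> V) : {set V} := A :&: Vsigma r p N A sigma.

(* m, defined recursively from the bottom; fuel k (tree height < #|V|). *)
Fixpoint m_fuel (V : finType) (r : V) (p : V -> V) (N A : {set V})
  (k : nat) (v : V) : nat :=
  match k with
  | 0 => 0
  | k'.+1 =>
    if v \in A then (1 + \sum_(w in children r p v :&: N) m_fuel r p N A k' w)%N
    else (\sum_(w in children r p v) m_fuel r p N A k' w)%N
  end.

Definition mval (V : finType) (r : V) (p : V -> V) (N A : {set V}) (v : V) : nat :=
  m_fuel r p N A #|V| v.

(* beta, defined recursively from the top; fuel k (depth < #|V|). *)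
Fixpoint beta_fuel (R : fieldType) (V : finType) (r : V) (p : V -> V)
  (N A : {set V}) (k : nat) (v : V) : R :=
  match k with
  | 0 => 1
  | k'.+1 =>
    if v == r then 1
    else if v \in A then (mval r p N A v)%:R * beta_fuel R r p N A k' (p v)
    else beta_fuel R r p N A k' (p v) / (mval r p N A v)%:R
  end%R.

Definition beta (R : fieldType) (V : finType) (r : V) (p : V -> V)
  (N A : {set V}) (v : V) : R := beta_fuel R r p N A #|V| v.

From HB Require Import structures.
From mathcomp Require Import all_boot all_order all_algebra ring.
Import Order.TTheory GRing.Theory Num.Theory.
Set Implicit Arguments. Unset Strict Implicit.

(* For an action a with parent infoset v, the recursions for m and beta give
   1/beta(a) = 1/beta(v) - sum_(w in C(a) :&: N) 1/beta(w), since
   sum_w m(w) = m(a) - 1.  Summing over A(sigma) telescopes: a |-> p a is a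
   bijection from A(sigma) onto N :&: V(sigma) (with inverse sigma), and the
   infosets below the actions of A(sigma) are exactly N :&: V(sigma) minus the
   root.  All that survives is 1/beta(r) = 1. *)

Section GameTree.
Variables (V : finType) (r : V) (p : V -> V) (N A : {set V}).

Local Notation C := (children r p).
Local Notation m := (mval r p N A).

Lemma card_prednK : #|V| = #|V|.-1.+1.
Proof. by rewrite prednK //; apply/card_gt0P; exists r. Qed.

(* The hypothesis says that x has no descendant at depth k. *)
Lemma m_fuel_stable k k' x :
  (forall y, iter k p y = x -> exists2 i, iter i p y = r & i < k) ->
  k <= k' -> m_fuel r p N A k' x = m_fuel r p N A k x.
Proof.
elim: k k' x => [|k IH] [|k'] x shallow //=; first by case: (shallow x).
rewrite ltnS => le_kk'.
have stable_child w : w \in C x -> m_fuel r p N A k' w = m_fuel r p N A k w.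
  rewrite inE => /andP [w_neq_r /eqP pw]; apply: IH => // y yw.
  have [i yi lt_ik] : exists2 i, iter i p y = r & i < k.+1.
    by apply: shallow; rewrite iterS yw.
  exists i => //; rewrite ltn_neqAle -ltnS lt_ik andbT.
  by apply: contra_neq w_neq_r => ik; rewrite -yw -ik.
case: (x \in A); last exact: eq_bigr.
by congr (_ + _)%N; apply: eq_bigr => w /setIP [/stable_child].
Qed.

Lemma beta_fuel_stable (R : fieldType) j k x :
  iter j p x = r -> j < k -> beta_fuel R r p N A k x = beta_fuel R r p N A j.+1 x.
Proof.
elim: j k x => [|j IH] [|k] x //= xr lt_jk; first by rewrite xr eqxx.
by case: eqP => // _; rewrite IH // -iterSr.
Qed.

Lemma beta_root (R : fieldType) : beta R r p N A r = 1%R.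
Proof. by rewrite /beta card_prednK /= eqxx. Qed.

Hypothesis tree : rooted_tree r p.

Lemma reach_root_lt_card x : exists2 j, iter j p x = r & j < #|V|.
Proof.
have [k xk] := tree.2 x.
have xr : fconnect p x r by rewrite -xk fconnect_iter.
exists (findex p x r); first exact: iter_findex.
exact: leq_trans (findex_max xr) (max_card _).
Qed.

Lemma mval_action a :
  a \in A -> m a = (1 + \sum_(w in C a :&: N) m w)%N.
Proof.
move=> aA; rewrite [LHS]/mval card_prednK /= aA; congr (_ + _)%N.
apply: eq_bigr => w; rewrite !inE => /andP [/andP [w_neq_r _] _].
rewrite /mval; symmetry; apply: m_fuel_stable (leq_pred _) => y yw.
have [i yi lt_iV] := reach_root_lt_card y.
exists i => //; move: lt_iV; rewrite card_prednK ltnS leq_eqVlt.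
by case: eqP => [ni|//]; move: w_neq_r; rewrite -yw -ni yi eqxx.
Qed.

Lemma beta_nonroot (R : fieldType) x : x != r ->
  beta R r p N A x = if x \in A then ((m x)%:R * beta R r p N A (p x))%R
                     else (beta R r p N A (p x) / (m x)%:R)%R.
Proof.
move=> x_neq_r; rewrite [LHS]/beta card_prednK /= (negbTE x_neq_r).
have [[|j] xj lt_jV] := reach_root_lt_card x; first by rewrite -xj eqxx in x_neq_r.
move: xj lt_jV; rewrite iterSr card_prednK ltnS => pxj lt_jV.
by rewrite /beta card_prednK (beta_fuel_stable _ pxj lt_jV)
  (beta_fuel_stable _ pxj (leqW lt_jV)).
Qed.

Hypothesis disjoint_NA : N :&: A = set0.

Lemma notin_A_of_N x : x \in N -> x \notin A.
Proof. by move=> xN; apply/negP => xA; move/setP/(_ x): disjoint_NA; rewrite !inE xN xA. Qed.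

Lemma inv_beta_action (R : fieldType) a : [pchar R]%R =i pred0 -> a \in A -> a != r ->
  ((beta R r p N A a)^-1 =
   (beta R r p N A (p a))^-1 - \sum_(w in C a :&: N) (beta R r p N A w)^-1)%R.
Proof.
move=> charR0 aA a_neq_r.
have beta_a := beta_nonroot R a_neq_r; rewrite aA in beta_a.
have inv_beta_w w : w \in C a :&: N ->
    ((beta R r p N A w)^-1 = (m w)%:R * (beta R r p N A a)^-1)%R.
  rewrite !inE => /andP [/andP [w_neq_r /eqP pw] wN].
  by rewrite beta_nonroot // (negbTE (notin_A_of_N wN)) pw invf_div.
rewrite (eq_bigr _ inv_beta_w) -mulr_suml -natr_sum beta_a invfM.
move: (mval_action aA) => ->; rewrite natrD.
set M := (\sum_(w in _) _)%N.
(* Abstracting 1/beta(p a) spares [field] the side condition beta(p a) != 0. *)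
set c := ((beta R r p N A (p a))^-1)%R.
have M1_neq0 : (1 + M%:R : R)%R != 0%R.
  by rewrite addrC natr1 (pcharf0P _).1.
by field.
Qed.

Hypothesis root_N : r \in N.
Hypothesis internal_children : forall v, (v \in N :|: A) = (C v != set0).
Hypothesis children_N : forall v, v \in N -> C v \subset A.
Hypothesis children_A : forall a, a \in A -> C a \subset N :|: leaves r p.

Lemma action_neq_root a : a \in A -> a != r.
Proof. by apply: contraTneq => ->; exact: notin_A_of_N. Qed.

Lemma parent_internal x : x != r -> p x \in N :|: A.
Proof.
by move=> x_neq_r; rewrite internal_children; apply/set0Pn; exists x; rewrite inE x_neq_r /=.
Qed.

Lemma parent_action a : a \in A -> p a \in N.
Proof.
move=> aA; have := parent_internal (action_neq_root aA).
rewrite inE => /orP [//|paA]; have := subsetP (children_A paA) a.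
rewrite !inE (action_neq_root aA) eqxx => /(_ isT) /orP [aN|].
  by move: (notin_A_of_N aN); rewrite aA.
have : a \in N :|: A by rewrite inE aA orbT.
by rewrite internal_children => /negbTE ->.
Qed.

Lemma parent_infoset v : v \in N -> v != r -> p v \in A.
Proof.
move=> vN v_neq_r; have := parent_internal v_neq_r.
rewrite inE => /orP [pvN|//]; have := subsetP (children_N pvN) v.
by rewrite inE v_neq_r eqxx (negbTE (notin_A_of_N vN)) => /(_ isT).
Qed.

Variable sigma : V -> V.
Hypothesis strat : strategy r p N sigma.

Local Notation Vs := (Vsigma r p N A sigma).
Local Notation As := (Asigma r p N A sigma).
Local Notation Ns := (N :&: Vs).

Lemma Vsigma_min S : closed_for r p N A sigma S -> Vs \subset S.
Proof.
by move=> closedS; apply/subsetP => x; rewrite inE => /forallP/(_ S); rewrite closedS.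
Qed.

Lemma Vsigma_closed : closed_for r p N A sigma Vs.
Proof.
have in_Vs x : (forall S, closed_for r p N A sigma S -> x \in S) -> x \in Vs.
  by move=> xS; rewrite inE; apply/forallP => S; apply/implyP; apply: xS.
apply/and3P; split.
- by apply: in_Vs => S /and3P [].
- apply/forall_inP => v /setIP [vN vVs]; apply: in_Vs => S closedS.
  have vS := subsetP (Vsigma_min closedS) v vVs.
  by case/and3P: closedS => _ /forall_inP sigmaS _; apply: sigmaS; rewrite inE vN vS.
- apply/forall_inP => a /setIP [aA aVs]; apply/subsetP => w wa; apply: in_Vs => S closedS.
  have aS := subsetP (Vsigma_min closedS) a aVs.
  by case/and3P: closedS => _ _ /forall_inP/(_ a); rewrite inE aA aS => /(_ isT)/subsetP; apply.
Qed.

Lemma root_Vsigma : r \in Vs.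
Proof. by case/and3P: Vsigma_closed. Qed.

Lemma sigma_Vsigma v : v \in Ns -> sigma v \in Vs.
Proof. by case/and3P: Vsigma_closed => _ /forall_inP + _; apply. Qed.

Lemma children_Vsigma a w : a \in As -> w \in C a -> w \in Vs.
Proof.
by move=> aAs wa; case/and3P: Vsigma_closed => _ _ /forall_inP/(_ a aAs)/subsetP; apply.
Qed.

(* By minimality, V(sigma) is contained in the closed set S of nodes whose
   parent lies in V(sigma) and, if that parent is an infoset, is its sigma-choice. *)
Lemma Vsigma_parent x : x \in Vs -> x != r ->
  p x \in Vs /\ (p x \in N -> sigma (p x) = x).
Proof.
pose S := [set y in Vs | (y == r) || (p y \in Vs) && ((p y \in N) ==> (sigma (p y) == y))].
have closedS : closed_for r p N A sigma S.
  apply/and3P; split; first by rewrite inE root_Vsigma eqxx.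
  - apply/forall_inP => v /setIP [vN]; rewrite inE => /andP [vVs _].
    have := strat vN; rewrite inE => /andP [sv_neq_r /eqP psv].
    have svVs : sigma v \in Vs by apply: sigma_Vsigma; apply/setIP.
    by rewrite inE svVs (negbTE sv_neq_r) psv vVs vN eqxx.
  - apply/forall_inP => a /setIP [aA]; rewrite inE => /andP [aVs _].
    have aAs : a \in As by apply/setIP.
    apply/subsetP => w wa; rewrite inE (children_Vsigma aAs wa) /=.
    move: wa; rewrite inE => /andP [w_neq_r /eqP ->].
    by rewrite (negbTE w_neq_r) aVs (negbTE (contraL (@notin_A_of_N a) aA)).
move=> xVs x_neq_r; have := subsetP (Vsigma_min closedS) x xVs.
rewrite inE xVs (negbTE x_neq_r) /= => /andP [pxVs /implyP sigma_px].
by split=> // pxN; apply/eqP/sigma_px.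
Qed.

Lemma parent_Asigma a : a \in As -> p a \in Ns /\ sigma (p a) = a.
Proof.
case/setIP=> aA aVs; have [paVs sigma_pa] := Vsigma_parent aVs (action_neq_root aA).
by have paN := parent_action aA; rewrite inE paN paVs sigma_pa.
Qed.

Lemma sigma_Nsigma v : v \in Ns -> sigma v \in As /\ p (sigma v) = v.
Proof.
move=> vNs; have /setIP [vN _] := vNs.
have sv := strat vN; move: (sv); rewrite inE => /andP [_ /eqP psv].
by rewrite inE (subsetP (children_N vN) _ sv) sigma_Vsigma.
Qed.

Lemma sum_Asigma_parent (R : nmodType) (F : V -> R) :
  (\sum_(a in As) F (p a) = \sum_(v in Ns) F v)%R.
Proof.
rewrite [RHS](reindex_onto p sigma); last by move=> v /sigma_Nsigma [].
apply: eq_bigl => a; apply/idP/andP => [/parent_Asigma [-> ->] // | [paNs /eqP <-]].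
by have [] := sigma_Nsigma paNs.
Qed.

Lemma sum_Asigma_children (R : nmodType) (F : V -> R) :
  (\sum_(a in As) \sum_(w in C a :&: N) F w = \sum_(w in Ns | w != r) F w)%R.
Proof.
rewrite [RHS](partition_big p (mem As)) => [|w /andP [/setIP [wN wVs] w_neq_r]]; last first.
  by apply/setIP; split; [apply: parent_infoset | apply: (Vsigma_parent wVs w_neq_r).1].
apply: eq_bigr => a aAs; apply: eq_bigl => w; rewrite -andbA.
apply/setIP/and3P => [[wa wN] | [/setIP [wN _] w_neq_r /eqP pw]].
  move: (wa); rewrite inE => /andP [-> /eqP ->].
  by rewrite inE wN (children_Vsigma aAs wa).
by rewrite inE w_neq_r pw eqxx.
Qed.

Lemma sum_inv_beta_Asigma (R : fieldType) : [pchar R]%R =i pred0 ->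
  (\sum_(a in As) (beta R r p N A a)^-1 = 1)%R.
Proof.
move=> charR0; rewrite (eq_bigr (fun a => (beta R r p N A (p a))^-1 -
                  \sum_(w in C a :&: N) (beta R r p N A w)^-1)%R); last first.
  by move=> a /setIP [aA _]; rewrite inv_beta_action ?action_neq_root.
rewrite sumrB (sum_Asigma_parent (fun v => (beta R r p N A v)^-1%R)).
rewrite (sum_Asigma_children (fun v => (beta R r p N A v)^-1%R)).
rewrite (bigD1 r) /=; last by rewrite inE root_N root_Vsigma.
by rewrite addrK beta_root invr1.
Qed.

End GameTree.

Theorem mainTheorem4 (R : realFieldType) (V : finType) (r : V) (p : V -> V)
  (N A : {set V}) (sigma : V -> V) :
  game_tree r p N A ->
  strategy r p N sigma ->
  (\sum_(a in Asigma r p N A sigma) (beta R r p N A a)^-1 = 1)%R.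
Proof.
move=> [tree [rN [NA0 [internal [children_N children_A]]]]] strat.
have childrenN_A v : v \in N -> children r p v \subset A by case/children_N.
by rewrite (sum_inv_beta_Asigma tree NA0 rN internal childrenN_A children_A strat) //;
  exact: pchar_num.
Qed.
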